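(* Let $\mathbf{A}$ be a nonempty subset of $\mathbf{P}_{\mathbf{U}}$. Then the following are equivalent: (i) there exists a subclass $\mathbf{X}\subseteq\mathbf{U}$ with $\mathbf{P}_{\mathbf{X}}=\mathbf{A}$; (ii) $\mathbf{A}$ is a submonoid of $(\mathbf{F},\circ)$; (iii) $\mathbf{A}$ is a submonoid of $(\mathbf{P}_{\mathbf{U}},\circ)$.
   Context: All metric spaces are assumed to have nonempty underlying sets. A metric space $(X,d)$ is ultrametric if $d(x,y)\le\max\{d(x,z),d(z,y)\}$ for all $x,y,z\in X$; $\mathbf{U}$ is the class of all ultrametric spaces. $\mathbf{F}$ is the set of all functions $f:[0,\infty)\to[0,\infty)$, a monoid under composition with identity $\mathrm{id}(x)=x$; a submonoid is a subset closed under composition containing $\mathrm{id}$. For a class $\mathbf{X}$ of metric spaces, $\mathbf{P}_{\mathbf{X}}$ denotes the set of all $f\in\mathbf{F}$ such that for every metric space $(X,d)$, if $(X,d)\in\mathbf{X}$ then $(X,f\circ d)\in\mathbf{X}$ (where $f\circ d(x,y)=f(d(x,y))$). Thus $\mathbf{P}_{\mathbf{U}}$ is the set of ultrametric preserving functions. *)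

From Stdlib Require Import Reals.
Open Scope R_scope.

Definition nnR : Type := { x : R | 0 <= x }.

Definition F : Type := nnR -> nnR.

Definition idF : F := fun x => x.
Definition compF (f g : F) : F := fun x => f (g x).

Definition is_metric (X : Type) (d : X -> X -> nnR) : Prop :=
  inhabited X /\
  (forall x y, proj1_sig (d x y) = 0 <-> x = y) /\
  (forall x y, d x y = d y x) /\
  (forall x y z, proj1_sig (d x y) <= proj1_sig (d x z) + proj1_sig (d z y)).

Definition is_ultrametric (X : Type) (d : X -> X -> nnR) : Prop :=
  is_metric X d /\
  (forall x y z, proj1_sig (d x y) <= Rmax (proj1_sig (d x z)) (proj1_sig (d z y))).

Definition MClass : Type := forall X : Type, (X -> X -> nnR) -> Prop.

Definition is_class_of_metric_spaces (C : MClass) : Prop :=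
  forall X d, C X d -> is_metric X d.

Definition U : MClass := is_ultrametric.

Definition subclass (C D : MClass) : Prop := forall X d, C X d -> D X d.

Definition compd {X : Type} (f : F) (d : X -> X -> nnR) : X -> X -> nnR :=
  fun x y => f (d x y).

Definition P (C : MClass) : F -> Prop :=
  fun f => forall X (d : X -> X -> nnR), is_metric X d -> C X d -> C X (compd f d).

Definition set_eq (A B : F -> Prop) : Prop := forall f, A f <-> B f.
Definition subset (A B : F -> Prop) : Prop := forall f, A f -> B f.

Definition submonoid_F (A : F -> Prop) : Prop :=
  A idF /\ (forall f g, A f -> A g -> A (compF f g)).

Definition submonoid_PU (A : F -> Prop) : Prop :=
  subset A (P U) /\ A idF /\ (forall f g, A f -> A g -> A (compF f g)).

(* The distance dmax x y = max(x, y) for x <> y (and 0 on the diagonal) is an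
   ultrametric on [0, oo) with dmax 0 t = t, so a function of F is determined
   by its composite with dmax.  Given a submonoid A of P_U, take for X the
   spaces ([0, oo), f o dmax) with f in A: they are ultrametric because
   A <= P_U, and A preserves X because A is closed under composition.  If g
   preserves X, then g o dmax = f o dmax for some f in A, since id is in A;
   hence g = f is in A.  Conversely P_X is always a submonoid of (F, o). *)

From Stdlib Require Import Reals Lra ProofIrrelevance FunctionalExtensionality Eqdep.

Lemma P_id (C : MClass) : P C idF.
Proof. intros X d _ HC; exact HC. Qed.

Lemma P_comp (C : MClass) (f g : F) :
  is_class_of_metric_spaces C -> P C f -> P C g -> P C (compF f g).
Proof.
  intros HC Hf Hg X d Hd HXd.
  assert (HXgd : C X (compd g d)) by exact (Hg X d Hd HXd).
  exact (Hf X (compd g d) (HC X _ HXgd) HXgd).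
Qed.

Lemma P_submonoid (C : MClass) :
  is_class_of_metric_spaces C -> submonoid_F (P C).
Proof. intro HC; split; [apply P_id | intros f g; apply P_comp, HC]. Qed.

Lemma submonoid_F_set_eq (A B : F -> Prop) :
  set_eq A B -> submonoid_F A -> submonoid_F B.
Proof.
  intros HAB [Hid Hcomp]; split.
  - apply HAB, Hid.
  - intros f g Hf Hg; apply HAB, Hcomp; apply HAB; assumption.
Qed.

Lemma is_ultrametric_intro (X : Type) (d : X -> X -> nnR) :
  inhabited X ->
  (forall x y, proj1_sig (d x y) = 0 <-> x = y) ->
  (forall x y, d x y = d y x) ->
  (forall x y z, proj1_sig (d x y) <= Rmax (proj1_sig (d x z)) (proj1_sig (d z y))) ->
  is_ultrametric X d.
Proof.
  intros Hinh Hsep Hsym Hultra; split; [|exact Hultra].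
  split; [exact Hinh | split; [exact Hsep | split; [exact Hsym |]]].
  intros x y z; eapply Rle_trans; [apply (Hultra x y z) |].
  destruct (d x z) as [a ha], (d z y) as [b hb]; simpl.
  unfold Rmax; destruct (Rle_dec a b); lra.
Qed.

Lemma nnR_eq (a b : nnR) : proj1_sig a = proj1_sig b -> a = b.
Proof. destruct a, b; apply subset_eq_compat. Qed.

Definition nnR0 : nnR := exist _ 0 (Rle_refl 0).

Definition nnRmax (x y : nnR) : nnR :=
  exist _ (Rmax (proj1_sig x) (proj1_sig y))
    (Rle_trans _ _ _ (proj2_sig x) (Rmax_l _ _)).

Definition dmax (x y : nnR) : nnR :=
  if Req_EM_T (proj1_sig x) (proj1_sig y) then nnR0 else nnRmax x y.

Lemma dmax_neq (x y : nnR) :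
  proj1_sig x <> proj1_sig y -> proj1_sig (dmax x y) = Rmax (proj1_sig x) (proj1_sig y).
Proof. unfold dmax; destruct (Req_EM_T _ _); [contradiction | reflexivity]. Qed.

Lemma dmax_ge0 (x y : nnR) : 0 <= proj1_sig (dmax x y).
Proof. exact (proj2_sig (dmax x y)). Qed.

Lemma dmax0l (t : nnR) : dmax nnR0 t = t.
Proof.
  unfold dmax; destruct t as [t ht]; simpl.
  destruct (Req_EM_T 0 t) as [<- | Ht]; apply nnR_eq; simpl; [reflexivity |].
  apply Rmax_right, ht.
Qed.

Lemma dmax_eq0 (x y : nnR) : proj1_sig (dmax x y) = 0 <-> x = y.
Proof.
  split.
  - intro H0; apply nnR_eq.
    destruct (Req_EM_T (proj1_sig x) (proj1_sig y)) as [Hxy | Hxy]; [exact Hxy |].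
    rewrite dmax_neq in H0 by exact Hxy.
    pose proof (Rmax_l (proj1_sig x) (proj1_sig y)).
    pose proof (Rmax_r (proj1_sig x) (proj1_sig y)).
    pose proof (proj2_sig x); pose proof (proj2_sig y); lra.
  - intros <-; unfold dmax; destruct (Req_EM_T _ _); [reflexivity | congruence].
Qed.

Lemma dmax_sym (x y : nnR) : dmax x y = dmax y x.
Proof.
  apply nnR_eq.
  destruct (Req_EM_T (proj1_sig x) (proj1_sig y)) as [Hxy | Hxy].
  - rewrite (proj2 (dmax_eq0 x y)), (proj2 (dmax_eq0 y x)); [reflexivity | |];
      apply nnR_eq; auto.
  - rewrite !dmax_neq by auto; apply Rmax_comm.
Qed.

(* If z = x then z <> y, so the second distance is max(x, y). *)
Lemma dmax_ultra_left (x y z : nnR) : proj1_sig x <> proj1_sig y ->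
  proj1_sig x <= Rmax (proj1_sig (dmax x z)) (proj1_sig (dmax z y)).
Proof.
  intro Hxy.
  destruct (Req_EM_T (proj1_sig x) (proj1_sig z)) as [Hxz | Hxz].
  - rewrite (dmax_neq z y) by congruence; rewrite <- Hxz.
    eapply Rle_trans; [apply Rmax_l | apply Rmax_r].
  - rewrite dmax_neq by exact Hxz.
    eapply Rle_trans; [apply Rmax_l | apply Rmax_l].
Qed.

Lemma dmax_ultra (x y z : nnR) :
  proj1_sig (dmax x y) <= Rmax (proj1_sig (dmax x z)) (proj1_sig (dmax z y)).
Proof.
  destruct (Req_EM_T (proj1_sig x) (proj1_sig y)) as [Hxy | Hxy].
  - rewrite (proj2 (dmax_eq0 x y)) by (apply nnR_eq; exact Hxy).
    eapply Rle_trans; [apply dmax_ge0 | apply Rmax_l].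
  - rewrite dmax_neq by exact Hxy; apply Rmax_lub.
    + apply dmax_ultra_left, Hxy.
    + rewrite Rmax_comm, (dmax_sym x z), (dmax_sym z y).
      apply dmax_ultra_left; auto.
Qed.

Lemma dmax_ultrametric : is_ultrametric nnR dmax.
Proof.
  apply is_ultrametric_intro;
    [exact (inhabits nnR0) | apply dmax_eq0 | apply dmax_sym | apply dmax_ultra].
Qed.

Lemma compd_dmax_inj (f g : F) : compd f dmax = compd g dmax -> f = g.
Proof.
  intro Hfg; apply functional_extensionality; intro t.
  rewrite <- (dmax0l t); exact (f_equal (fun d => d nnR0 t) Hfg).
Qed.

Definition cast {X : Type} (e : X = nnR) (x : X) : nnR :=
  eq_rect X (fun T => T) x nnR e.

(* Membership requires the carrier to be [nnR] itself, not merely isometric to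
   it: this is what lets [dmax_class_nnR] recover the function f. *)
Definition dmax_class (A : F -> Prop) : MClass :=
  fun X d => exists (e : X = nnR) (f : F), A f /\
    forall x y, d x y = f (dmax (cast e x) (cast e y)).

Lemma dmax_class_nnR (A : F -> Prop) (d : nnR -> nnR -> nnR) :
  dmax_class A nnR d <-> exists f, A f /\ d = compd f dmax.
Proof.
  split.
  - intros [e [f [Hf Hd]]]; rewrite (UIP_refl _ _ e) in Hd.
    exists f; split; [exact Hf |].
    do 2 (apply functional_extensionality; intro); apply Hd.
  - intros [f [Hf ->]]; exists eq_refl, f; split; [exact Hf | reflexivity].
Qed.

Lemma dmax_class_sub_U (A : F -> Prop) : subset A (P U) -> subclass (dmax_class A) U.
Proof.
  intros HAU X d HXd; destruct HXd as [e HXd]; subst X.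
  destruct (proj1 (dmax_class_nnR A d) (ex_intro _ eq_refl HXd)) as [f [Hf ->]].
  apply (HAU f Hf); [apply dmax_ultrametric | apply dmax_ultrametric].
Qed.

Lemma submonoid_sub_P_dmax_class (A : F -> Prop) (g : F) :
  (forall f h, A f -> A h -> A (compF f h)) -> A g -> P (dmax_class A) g.
Proof.
  intros Hcomp Hg X d _ [e [f [Hf Hd]]].
  exists e, (compF g f); split; [apply Hcomp; assumption |].
  intros x y; unfold compd, compF; rewrite Hd; reflexivity.
Qed.

Lemma P_dmax_class_sub (A : F -> Prop) (g : F) :
  subset A (P U) -> A idF -> P (dmax_class A) g -> A g.
Proof.
  intros HAU Hid Hg.
  assert (Hdmax : dmax_class A nnR dmax)
    by (apply dmax_class_nnR; exists idF; split; [exact Hid | reflexivity]).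
  assert (Hmetric : is_metric nnR dmax) by apply dmax_ultrametric.
  destruct (proj1 (dmax_class_nnR A _) (Hg nnR dmax Hmetric Hdmax)) as [f [Hf Hgf]].
  rewrite (compd_dmax_inj g f Hgf); exact Hf.
Qed.

Theorem mainTheorem10 (A : F -> Prop) :
  (exists f, A f) -> subset A (P U) ->
  (((exists C : MClass, is_class_of_metric_spaces C /\ subclass C U /\ set_eq (P C) A)
      <-> submonoid_F A) /\
   (submonoid_F A <-> submonoid_PU A)).
Proof.
  intros _ HAU; split; [split |].
  - intros [C [HC [_ HPC]]].
    exact (submonoid_F_set_eq _ _ HPC (P_submonoid C HC)).
  - intros [Hid Hcomp]; exists (dmax_class A).
    assert (HU : subclass (dmax_class A) U) by apply dmax_class_sub_U, HAU.
    split; [intros X d HXd; apply (HU X d HXd) | split; [exact HU |]].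
    intro g; split.
    + exact (P_dmax_class_sub A g HAU Hid).
    + exact (submonoid_sub_P_dmax_class A g Hcomp).
  - unfold submonoid_F, submonoid_PU; tauto.
Qed.
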